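(* Let $(T,E)$ be the $3$-regular tree, let $x\in T$, and let $y$ be a neighbor of $x$. For every integer $t\ge 0$, the Fibonacci vectors $s_t(x)$ and $r_t(x,y)$ have non-negative coordinates, and $$s_t(x)_- = f_{2t},\quad s_t(x)_+ = f_{2t+2},\quad r_t(x,y)_- = f_{2t-1},\quad r_t(x,y)_+ = f_{2t+1}.$$
   Context: $(f_i)_{i\in\mathbb Z}$ denotes the Fibonacci numbers with $f_0=0$, $f_1=1$ and $f_{i+1}=f_i+f_{i-1}$ for all $i\in\mathbb Z$ (so $f_{-1}=1$). $(T,E)$ is the $3$-regular tree (every vertex has exactly three neighbors); $d(x,z)$ is the graph distance. $K_0(T)$ is the free abelian group with basis $\{s(x): x\in T\}$; an element is written $a=\sum_x a_x s(x)$ with finitely many nonzero $a_x\in\mathbb Z$. For $y\in T$ the reflection $\sigma^y:K_0(T)\to K_0(T)$ is given by $(\sigma^y a)_z=a_z$ for $z\neq y$ and $(\sigma^y a)_y=-a_y+\sum_{\{z,y\}\in E}a_z$. For $x\in T$, $\Sigma^x$ denotes the composition of all $\sigma^y$ with $d(x,y)$ even, and $\underline\Sigma^x$ the composition of all $\sigma^y$ with $d(x,y)$ odd (these reflections pairwise commute, so the compositions are well defined on $K_0(T)$). Define $s_0(x)=s(x)$ and $s_{t+1}(x)=\underline\Sigma^x s_t(x)$ if $t$ is even, $s_{t+1}(x)=\Sigma^x s_t(x)$ if $t$ is odd. For neighbors $x,y$ define $r_0(x,y)=s(x)+s(y)$ and $r_{t+1}(x,y)=\underline\Sigma^x r_t(x,y)$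 if $t$ is even, $r_{t+1}(x,y)=\Sigma^x r_t(x,y)$ if $t$ is odd. For such a vector $a$ (equal to $s_t(x)$ or $r_t(x,y)$) put $a_-=\sum_{z:\,d(x,z)\not\equiv t \pmod 2} a_z$ and $a_+=\sum_{z:\,d(x,z)\equiv t\pmod 2} a_z$. *)

From HB Require Import structures.
From mathcomp Require Import all_boot all_order all_algebra.
Set Implicit Arguments. Unset Strict Implicit. Unset Printing Implicit Defensive.
Import Order.TTheory GRing.Theory Num.Theory.
Local Open Scope ring_scope.

(* ---------- The 3-regular tree ----------
   Model: the Cayley graph of Z/2 * Z/2 * Z/2, i.e. reduced words over the
   alphabet 'I_3 (no two consecutive letters equal); w is adjacent to
   w ++ [a] (for a <> last letter of w) and to w with its last letter removed. *)
Definition word := seq 'I_3.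
Definition reduced (w : word) : bool := sorted (fun a b : 'I_3 => a != b) w.
Definition T := {w : word | reduced w}.

Definition letters : seq 'I_3 :=
  [:: Ordinal (erefl true : (0 < 3)%N); Ordinal (erefl true : (1 < 3)%N); Ordinal (erefl true : (2 < 3)%N)].

Definition nbrs_raw (w : word) : seq word :=
  (if w is [::] then [::] else [:: take (size w).-1 w]) ++
  [seq rcons w a | a <- letters & (w == [::]) || (a != last a w)].

Definition mkT (w : word) : option T :=
  (if reduced w as b return reduced w = b -> option T
   then fun h => Some (exist _ w h) else fun _ => None) erefl.

(* neighbours of a vertex (all raw neighbours of a reduced word are reduced) *)
Definition nbrs (u : T) : seq T := pmap mkT (nbrs_raw (val u)).

Definition adj (u v : T) : bool := v \in nbrs u.

Fixpoint walkb (n : nat) (u v : T) : bool :=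
  if n is n'.+1 then has (fun w => walkb n' w v) (nbrs u) else u == v.

(* graph distance: least n admitting a walk of length n (the search bound
   |u| + |v| always suffices, since one can walk through the root) *)
Definition dist (u v : T) : nat :=
  find (fun n => walkb n u v) (iota 0 (size (val u) + size (val v)).+1).

Definition vec := T -> int.

Definition sbase (x : T) : vec := fun z => ((z == x) : nat)%:Z.

Definition refl (y : T) (a : vec) : vec :=
  fun z => if z == y then - a y + \sum_(w <- nbrs y) a w else a z.

(* Sigma^x : composition of all sigma^y with d(x,y) even;
   underline Sigma^x : composition of all sigma^y with d(x,y) odd.
   These reflections pairwise commute and each only changes its own
   coordinate reading neighbouring coordinates (of the other parity), so the
   composition acts coordinatewise as follows. *)
Definition SigmaPar (x : T) (par : bool) (a : vec) : vec :=
  fun z => if odd (dist x z) == par then - a z + \sum_(w <- nbrs z) a w else a z.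
Definition Sigma (x : T) := SigmaPar x false.
Definition uSigma (x : T) := SigmaPar x true.

Fixpoint svec (x : T) (t : nat) : vec :=
  if t is t'.+1 then (if odd t' then Sigma x else uSigma x) (svec x t')
  else sbase x.

Fixpoint rvec (x y : T) (t : nat) : vec :=
  if t is t'.+1 then (if odd t' then Sigma x else uSigma x) (rvec x y t')
  else (fun z => sbase x z + sbase y z).

Definition covers (a : vec) (S : seq T) : Prop :=
  uniq S /\ forall z, a z != 0 -> z \in S.

Definition sum_minus (x : T) (t : nat) (a : vec) (S : seq T) : int :=
  \sum_(z <- S | odd (dist x z) != odd t) a z.
Definition sum_plus (x : T) (t : nat) (a : vec) (S : seq T) : int :=
  \sum_(z <- S | odd (dist x z) == odd t) a z.

Fixpoint fibn (n : nat) : nat :=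
  match n with 0 => 0 | 1 => 1 | (m.+1 as k).+1 => fibn k + fibn m end.

(* f_{-m} = (-1)^(m+1) f_m ; Negz n = -(n+1) *)
Definition fib (i : int) : int :=
  match i with
  | Posz n => (fibn n)%:Z
  | Negz n => (-1) ^+ n * (fibn n.+1)%:Z
  end.

(* Reflecting all vertices of one parity class replaces each such coordinate
   a_z by (sum of the neighbours of z) - a_z and leaves the others alone.  Every
   vertex has three neighbours, all of the other parity, so double counting shows
   that one step maps the pair (a_-, a_+) to (a_+, 3 a_+ - a_-), which is the
   Fibonacci recurrence f_(n+4) = 3 f_(n+2) - f_n; the initial pairs (0, 1) and
   (1, 1) = (f_(-1), f_1) give the stated values.
   Nonnegativity is propagated by an invariant: before each step, every vertex z
   of the parity about to be reflected has a_z <= sum of its neighbours, and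
   every other vertex z has at least two neighbours whose value after the step
   is >= a_z. *)

From HB Require Import structures.
From mathcomp Require Import all_boot all_order all_algebra.
From mathcomp Require Import zify ring.
Import Order.TTheory GRing.Theory Num.Theory.
Set Implicit Arguments. Unset Strict Implicit. Unset Printing Implicit Defensive.

Lemma mkTK : ocancel mkT val.
Proof. by move=> w; rewrite /mkT; move: (erefl (reduced w)); case: {2 3}(reduced w). Qed.

Lemma mkT_val (u : T) : mkT (val u) = Some u.
Proof.
case: u => w wr; rewrite /mkT /=; move: (erefl (reduced w)).
case: {2 3}(reduced w) => e; last by rewrite wr in e.
by rewrite (bool_irrelevance e wr).
Qed.

Lemma mem_letters (a : 'I_3) : a \in letters.
Proof. by case: a => [[|[|[|m]]] ?]. Qed.

Definition parent (w : word) : word := take (size w).-1 w.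

Lemma parent_rcons w a : parent (rcons w a) = w.
Proof. by rewrite /parent size_rcons -cats1 take_size_cat. Qed.

Lemma size_parent w : w != [::] -> size w = (size (parent w)).+1.
Proof. by case/lastP: w => // w a _; rewrite parent_rcons size_rcons. Qed.

Lemma reduced_parent w : reduced w -> reduced (parent w).
Proof. exact: take_sorted. Qed.

Lemma reduced_rcons w a :
  reduced (rcons w a) = reduced w && ((w == [::]) || (last a w != a)).
Proof. by case: w => //= b w; rewrite rcons_path. Qed.

Lemma mem_nbrs_raw w v : reduced v -> (v \in nbrs_raw w) =
  ((w != [::]) && (v == parent w)) || ((v != [::]) && (w == parent v)).
Proof.
move=> vr; rewrite /nbrs_raw mem_cat; congr orb; first by case: w => //= b w; rewrite inE.
apply/mapP/idP => [[a _ ->]|]; first by rewrite parent_rcons eqxx andbT; case: w.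
case/lastP: v vr => // v a vr /andP[_ /eqP->]; rewrite parent_rcons.
exists a => //; rewrite mem_filter mem_letters andbT.
move: vr; rewrite reduced_rcons => /andP[_ /orP[->|]] // va.
by rewrite eq_sym in va; rewrite va orbT.
Qed.

Lemma reduced_nbrs_raw w v : reduced w -> v \in nbrs_raw w -> reduced v.
Proof.
move=> wr; rewrite /nbrs_raw mem_cat => /orP[|/mapP[a]].
  by case: w wr => // b w wr; rewrite inE => /eqP->; apply: reduced_parent.
rewrite mem_filter => /andP[aw _] ->; rewrite reduced_rcons wr.
by case: eqP aw => //= _; rewrite eq_sym.
Qed.

Lemma uniq_nbrs_raw w : uniq (nbrs_raw w).
Proof.
rewrite /nbrs_raw cat_uniq map_inj_uniq ?filter_uniq ?andbT //; last exact: rcons_injr.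
case: w => // b w; apply/hasP => -[_ /mapP[a _ ->]].
by rewrite inE => /eqP/(congr1 size); rewrite size_rcons size_take /= ltnSn; lia.
Qed.

Lemma size_nbrs_raw w : size (nbrs_raw w) = 3%N.
Proof.
case/lastP: w => [|w a] //; rewrite /nbrs_raw size_cat size_map size_filter.
have -> : (rcons w a == [::]) = false by case: w.
by case: w => [|b w]; rewrite /= ?last_rcons; case: a => [[|[|[|m]]] ?].
Qed.

Lemma mem_nbrs u v : (v \in nbrs u) =
  ((val u != [::]) && (val v == parent (val u))) ||
  ((val v != [::]) && (val u == parent (val v))).
Proof. by rewrite (can2_mem_pmap mkTK mkT_val) mem_nbrs_raw ?(valP v). Qed.

Lemma nbrs_sym u v : (v \in nbrs u) = (u \in nbrs v).
Proof. by rewrite !mem_nbrs orbC. Qed.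

Lemma uniq_nbrs u : uniq (nbrs u).
Proof. exact: (pmap_uniq mkTK (uniq_nbrs_raw _)). Qed.

Lemma size_nbrs u : size (nbrs u) = 3%N.
Proof.
rewrite size_pmap -(size_nbrs_raw (val u)) -[RHS]count_predT.
apply: eq_in_count => w /(reduced_nbrs_raw (valP u)) wr /=.
by rewrite -[w]/(val (exist _ w wr : T)) mkT_val.
Qed.

Lemma odd_size_nbrs u v : v \in nbrs u -> odd (size (val v)) = ~~ odd (size (val u)).
Proof.
by rewrite mem_nbrs => /orP[] /andP[/size_parent-> /eqP->] //=; rewrite negbK.
Qed.

Definition root : T := exist _ [::] isT.

Definition parentT (u : T) : T := exist _ (parent (val u)) (reduced_parent (valP u)).

Lemma walkb_odd n u v : walkb n u v -> odd n = odd (size (val u)) (+) odd (size (val v)).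
Proof.
elim: n u => [|n IHn] u /=; first by move/eqP->; rewrite addbb.
by case/hasP=> w uw /IHn->; rewrite (odd_size_nbrs uw) addNb negbK.
Qed.

Lemma walkb_cat m n u w v : walkb m u w -> walkb n w v -> walkb (m + n) u v.
Proof.
elim: m u => [|m IHm] u /=; first by move/eqP->.
by case/hasP=> u' uu' u'w wv; apply/hasP; exists u' => //; apply: IHm u'w wv.
Qed.

Lemma walkb_sym n u v : walkb n u v -> walkb n v u.
Proof.
elim: n u v => [|n IHn] u v; first by rewrite /= eq_sym.
case/hasP=> w uw /IHn vw; rewrite -addn1; apply: walkb_cat vw _.
by apply/hasP; exists u; rewrite // -nbrs_sym.
Qed.

Lemma walkb_root u : walkb (size (val u)) u root.
Proof.
suff: forall k u, size (val u) = k -> walkb k u root by apply.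
elim=> [|k IHk] {}u su /=; first by apply/eqP/val_inj/size0nil.
have u0 : val u != [::] by case: (val u) su.
apply/hasP; exists (parentT u); first by rewrite mem_nbrs u0 eqxx.
by apply: IHk; move: su; rewrite (size_parent u0) => -[].
Qed.

Lemma walkb_dist u v : walkb (dist u v) u v.
Proof.
set n := (size (val u) + size (val v))%N.
have ex : has (fun k => walkb k u v) (iota 0 n.+1).
  apply/hasP; exists n; first by rewrite mem_iota ltnSn.
  exact: walkb_cat (walkb_root u) (walkb_sym (walkb_root v)).
have := nth_find 0%N ex; rewrite nth_iota ?add0n //.
by rewrite has_find size_iota in ex.
Qed.

Lemma odd_dist u v : odd (dist u v) = odd (size (val u)) (+) odd (size (val v)).
Proof. exact: walkb_odd (walkb_dist u v). Qed.

Lemma odd_dist_nbrs x z w : w \in nbrs z -> odd (dist x w) = ~~ odd (dist x z).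
Proof. by move=> zw; rewrite !odd_dist (odd_size_nbrs zw) addbN. Qed.

Lemma odd_dist_refl x : odd (dist x x) = false.
Proof. by rewrite odd_dist addbb. Qed.

Lemma odd_dist_neq x z : odd (dist x z) -> z != x.
Proof. by apply: contraTneq => ->; rewrite odd_dist_refl. Qed.

Lemma eqbN (b c : bool) : (b == ~~ c) = (b != c).
Proof. by case: b; case: c. Qed.

Lemma odd_dist_nbrs_eq x c z w : w \in nbrs z ->
  (odd (dist x w) == c) = (odd (dist x z) != c).
Proof. by move/(odd_dist_nbrs x)->; rewrite eqb_negLR eqbN. Qed.

Lemma nbrs_neq x y : y \in nbrs x -> x != y.
Proof.
by move=> xy; rewrite eq_sym odd_dist_neq // (odd_dist_nbrs x xy) odd_dist_refl.
Qed.

Local Open Scope ring_scope.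

Section SeqSums.

Variable I : eqType.
Implicit Types (r s : seq I) (P : pred I).

Lemma big_uniq_supp (V : nmodType) r s P (F : I -> V) : uniq r -> uniq s ->
    (forall i, P i -> F i != 0 -> (i \in r) = (i \in s)) ->
  \sum_(i <- r | P i) F i = \sum_(i <- s | P i) F i.
Proof.
move=> ur us rs; apply: perm_big_supp_cond; apply: uniq_perm; rewrite ?filter_uniq //.
by move=> i; rewrite !mem_filter; case: (P i) (F i != 0) (rs i) => [] [] // ->.
Qed.

Lemma ler_sum_uniq_sub (R : numDomainType) r s (F : I -> R) : uniq r -> uniq s -> {subset r <= s} ->
  (forall i, 0 <= F i) -> \sum_(i <- r) F i <= \sum_(i <- s) F i.
Proof.
move=> ur us rs F0; rewrite [X in _ <= X](bigID (mem r)) /=.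
rewrite [X in X <= _]big_seq (big_uniq_supp ur us) => [|i ri _]; last by rewrite rs.
by rewrite lerDl sumr_ge0.
Qed.

Lemma exists_other s a b : uniq s -> (2 < size s)%N ->
  exists2 o, o \in s & (o != a) && (o != b).
Proof.
move=> us s2; apply/hasP; apply: contraTT s2 => /hasPn sab; rewrite -leqNgt.
apply: (uniq_leq_size (s2 := [:: a; b]) us) => i /sab.
by rewrite !inE negb_and !negbK.
Qed.

End SeqSums.

Definition nbsum (a : vec) (z : T) : int := \sum_(w <- nbrs z) a w.

Definition nbexcess (a : vec) (z : T) : int := nbsum a z - a z.

Lemma SigmaParE x c a z :
  SigmaPar x c a z = if odd (dist x z) == c then nbexcess a z else a z.
Proof. by rewrite /SigmaPar addrC. Qed.

Definition nbhd (S : seq T) : seq T := undup (S ++ flatten [seq nbrs w | w <- S]).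

Lemma uniq_nbhd S : uniq (nbhd S).
Proof. exact: undup_uniq. Qed.

Lemma mem_nbhd S z : z \in S -> z \in nbhd S.
Proof. by move=> zS; rewrite mem_undup mem_cat zS. Qed.

Lemma mem_nbhd_nbrs S w z : w \in S -> z \in nbrs w -> z \in nbhd S.
Proof.
move=> wS wz; rewrite mem_undup mem_cat; apply/orP; right.
by apply/flattenP; exists (nbrs w); first exact: map_f.
Qed.

Lemma sum_covers (P : pred T) a S S' : covers a S -> covers a S' ->
  \sum_(z <- S | P z) a z = \sum_(z <- S' | P z) a z.
Proof. by move=> [uS aS] [uS' aS']; apply: big_uniq_supp => // z _ /[dup] /aS-> /aS'->. Qed.

Lemma covers_nbhd a S : covers a S -> covers a (nbhd S).
Proof. by move=> [_ aS]; split=> [|z /aS]; [apply: uniq_nbhd | apply: mem_nbhd]. Qed.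

Lemma covers_SigmaPar x c a S : covers a S -> covers (SigmaPar x c a) (nbhd S).
Proof.
move=> [uS aS]; split=> [|z]; first exact: uniq_nbhd.
rewrite SigmaParE /nbexcess /nbsum; case: ifP => _; last by move/aS/mem_nbhd.
case: (eqVneq (a z) 0) => [->|/aS/mem_nbhd //]; rewrite subr0 => nz.
have /hasP[w zw /aS wS] : has (fun w => a w != 0) (nbrs z).
  by apply: contraNT nz => /hasPn a0; rewrite big1_seq // => w /andP[_ /a0 /negPn/eqP].
by apply: mem_nbhd_nbrs wS _; rewrite nbrs_sym.
Qed.

Lemma nbsum_covers a S z : covers a S -> nbsum a z = \sum_(w <- S | z \in nbrs w) a w.
Proof.
move=> [uS aS]; rewrite /nbsum big_seq (big_uniq_supp (uniq_nbrs z) uS).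
  by apply: eq_bigl => w; rewrite nbrs_sym.
by move=> w -> /aS->.
Qed.

Lemma sum_nbsum_parity x c a S : covers a S ->
  \sum_(z <- nbhd S | odd (dist x z) == c) nbsum a z =
  (\sum_(w <- S | odd (dist x w) != c) a w) *+ 3.
Proof.
move=> aS; rewrite (eq_bigr _ (fun z _ => nbsum_covers z aS)).
under eq_bigr do rewrite big_mkcond /=.
rewrite exchange_big -sumrMnl [RHS]big_mkcond /=; apply: eq_big_seq => w wS.
rewrite -big_mkcondr /=; case: ifPn => wc.
- rewrite (big_uniq_supp (uniq_nbhd S) (uniq_nbrs w)) => [|z /andP[_ wz] _]; last first.
    by rewrite wz (mem_nbhd_nbrs wS wz).
  rewrite big_seq_cond (eq_bigl (mem (nbrs w))) -?big_seq => [|z] /=.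
    by rewrite big_const_seq count_predT size_nbrs iter_addr_0.
  by case: (boolP (z \in nbrs w)) => // wz; rewrite (odd_dist_nbrs_eq x c wz) wc.
- apply: big_pred0 => z; case: (boolP (z \in nbrs w)) => [wz|]; rewrite ?andbF //.
  by rewrite (odd_dist_nbrs_eq x c wz) (negbTE wc).
Qed.

Lemma sums_SigmaPar x t a S : covers a S ->
  sum_minus x t.+1 (SigmaPar x (~~ odd t) a) (nbhd S) = sum_plus x t a S /\
  sum_plus x t.+1 (SigmaPar x (~~ odd t) a) (nbhd S) =
    sum_plus x t a S *+ 3 - sum_minus x t a S.
Proof.
move=> aS; have aN := covers_nbhd aS; rewrite /sum_minus /sum_plus /=; split.
  rewrite (sum_covers _ aS aN); apply: eq_big => [z|z zt]; first by rewrite eqbN negbK.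
  by rewrite SigmaParE (negbTE zt).
rewrite (eq_bigr (nbexcess a)) => [|z zt]; last by rewrite SigmaParE zt.
rewrite /nbexcess big_split /= sumrN sum_nbsum_parity // (sum_covers _ aN aS).
by congr (_ *+ 3 - _); apply: eq_bigl => z; rewrite eqbN ?negbK.
Qed.

Lemma fibn_SS n : fibn n.+2 = (fibn n.+1 + fibn n)%N.
Proof. by []. Qed.

Lemma fibD2 (i : int) : fib (i + 2) = fib (i + 1) + fib i.
Proof.
case: i => [n|[|[|k]]]; rewrite ?NegzE //.
  by rewrite -!PoszD (_ : (n + (1 + 1) = n.+2)%N) ?addn1 //; lia.
have -> : - (k.+3)%:Z + 2 = Negz k by rewrite NegzE; lia.
have -> : - (k.+3)%:Z + 1 = Negz k.+1 by rewrite NegzE; lia.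
rewrite -NegzE /fib [fibn k.+3]fibn_SS PoszD !exprS; ring.
Qed.

Lemma fibD4 (i : int) : fib (i + 4) = fib (i + 2) *+ 3 - fib i.
Proof.
rewrite (_ : i + 4 = i + 2 + 2) ?fibD2; last ring.
rewrite (_ : i + 2 + 1 = i + 1 + 2) ?fibD2; last ring.
rewrite (_ : i + 1 + 1 = i + 2) ?fibD2; last ring.
ring.
Qed.

Lemma fib_sums x (a : nat -> vec) (d : int) :
    (forall t, a t.+1 = SigmaPar x (~~ odd t) (a t)) ->
    (exists2 S, covers (a 0%N) S &
       sum_minus x 0 (a 0%N) S = fib d /\ sum_plus x 0 (a 0%N) S = fib (d + 2)) ->
  forall t, exists2 S, covers (a t) S &
    sum_minus x t (a t) S = fib (2 * t%:Z + d) /\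
    sum_plus x t (a t) S = fib (2 * t%:Z + d + 2).
Proof.
move=> aS [S0 cov0 sums0]; elim=> [|t [S cov [m p]]]; first by exists S0; rewrite ?add0r.
exists (nbhd S); first by rewrite aS; apply: covers_SigmaPar.
have [m' p'] := sums_SigmaPar x t cov; rewrite aS m' p' p m -fibD4.
by split; congr fib; lia.
Qed.

Lemma sums_covers x t a S S' : covers a S -> covers a S' ->
  sum_minus x t a S = sum_minus x t a S' /\ sum_plus x t a S = sum_plus x t a S'.
Proof. by move=> aS aS'; split; apply: sum_covers. Qed.

Lemma svecS x t : svec x t.+1 = SigmaPar x (~~ odd t) (svec x t).
Proof. by rewrite /=; case: (odd t). Qed.

Lemma rvecS x y t : rvec x y t.+1 = SigmaPar x (~~ odd t) (rvec x y t).
Proof. by rewrite /=; case: (odd t). Qed.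

Lemma sbaseE x z : sbase x z = (z == x)%:R.
Proof. by rewrite /sbase; case: eqP. Qed.

Lemma sbase_ge0 x z : 0 <= sbase x z.
Proof. by rewrite sbaseE ler0n. Qed.

Lemma svec_fib_sums x t : (exists S, covers (svec x t) S) /\
  forall S, covers (svec x t) S ->
    sum_minus x t (svec x t) S = fib (2 * t%:Z) /\
    sum_plus x t (svec x t) S = fib (2 * t%:Z + 2).
Proof.
have init : exists2 S, covers (svec x 0) S &
    sum_minus x 0 (svec x 0) S = fib 0 /\ sum_plus x 0 (svec x 0) S = fib (0 + 2).
  exists [:: x]; last first.
    by rewrite /sum_minus /sum_plus !big_cons !big_nil odd_dist_refl /= sbaseE eqxx.
  by split=> // z; rewrite /= sbaseE inE; case: (z == x).
have [S cov [m p]] := fib_sums (svecS x) init t.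
split=> [|S' cov']; first by exists S.
by have [<- <-] := sums_covers x t cov cov'; rewrite m p addr0.
Qed.

Lemma rvec_fib_sums x y t : y \in nbrs x -> (exists S, covers (rvec x y t) S) /\
  forall S, covers (rvec x y t) S ->
    sum_minus x t (rvec x y t) S = fib (2 * t%:Z - 1) /\
    sum_plus x t (rvec x y t) S = fib (2 * t%:Z + 1).
Proof.
move=> xy; have yx := nbrs_neq xy.
have init : exists2 S, covers (rvec x y 0) S &
    sum_minus x 0 (rvec x y 0) S = fib (- 1) /\ sum_plus x 0 (rvec x y 0) S = fib (- 1 + 2).
  exists [:: x; y].
    split=> [|z]; first by rewrite /= inE yx.
    by rewrite /= !sbaseE !inE; case: (z == x); case: (z == y).
  rewrite /sum_minus /sum_plus !big_cons !big_nil (odd_dist_nbrs x xy) odd_dist_refl /=.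
  by rewrite !sbaseE !eqxx eq_sym (negbTE yx).
have [S cov [m p]] := fib_sums (rvecS x y) init t.
split=> [|S' cov']; first by exists S.
by have [<- <-] := sums_covers x t cov cov'; rewrite m p -addrA.
Qed.

Record positivity_inv x (c : bool) (a : vec) : Prop := PositivityInv {
  inv_ge0 : forall z, 0 <= a z;
  inv_nbexcess_ge0 : forall z, odd (dist x z) == c -> 0 <= nbexcess a z;
  inv_two_nbrs : forall z, odd (dist x z) != c ->
    forall w, exists2 o, o \in nbrs z & (o != w) && (a z <= nbexcess a o) }.

Lemma exists_nbr_other z v w : exists2 o, o \in nbrs z & (o != v) && (o != w).
Proof. by apply: exists_other; rewrite ?uniq_nbrs ?size_nbrs. Qed.

Lemma le_nbsum a z w : (forall v, 0 <= a v) -> w \in nbrs z -> a w <= nbsum a z.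
Proof.
move=> a0 zw; have := ler_sum_uniq_sub (r := [:: w]) (s := nbrs z) _ _ _ a0.
by rewrite big_seq1; apply; rewrite ?uniq_nbrs // => v; rewrite inE => /eqP->.
Qed.

Lemma le2_nbsum a z v w : (forall u, 0 <= a u) -> v \in nbrs z -> w \in nbrs z ->
  v != w -> a v + a w <= nbsum a z.
Proof.
move=> a0 zv zw vw; have := ler_sum_uniq_sub (r := [:: v; w]) (s := nbrs z) _ _ _ a0.
rewrite big_cons big_seq1; apply; rewrite ?uniq_nbrs //= ?inE ?vw // => u.
by rewrite !inE => /orP[] /eqP->.
Qed.

Lemma positivity_inv_SigmaPar x c a :
  positivity_inv x c a -> positivity_inv x (~~ c) (SigmaPar x c a).
Proof.
case=> a0 ex0 two; set b := SigmaPar x c a.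
have b0 z : 0 <= b z by rewrite /b SigmaParE; case: ifP => [/ex0|].
split=> // z; rewrite ?eqbN ?negbK => zc.
  have [o zo /andP[_ ao]] := two z zc z.
  rewrite /nbexcess {2}/b SigmaParE (negbTE zc) subr_ge0 (le_trans ao) //.
  by have := le_nbsum b0 zo; rewrite /b SigmaParE (odd_dist_nbrs_eq x c zo) zc.
move=> w; have [o zo /andP[ow _]] := exists_nbr_other z w w.
have oc : odd (dist x o) != c by rewrite (odd_dist_nbrs_eq x c zo) negbK.
have [v ov /andP[vz av]] := two o oc z.
exists o; rewrite // ow /=.
have vc : odd (dist x v) == c by rewrite (odd_dist_nbrs_eq x c ov).
have := le2_nbsum b0 (_ : z \in nbrs o) ov (_ : z != v); rewrite -nbrs_sym eq_sym.
rewrite /nbexcess [b v]/b [b o]/b !SigmaParE (negbTE oc) vc => /(_ zo vz).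
lia.
Qed.

Lemma positivity_inv_iter x (a : nat -> vec) :
    (forall t, a t.+1 = SigmaPar x (~~ odd t) (a t)) -> positivity_inv x true (a 0%N) ->
  forall t, positivity_inv x (~~ odd t) (a t).
Proof. by move=> aS a0; elim=> // t IHt; rewrite aS; apply: positivity_inv_SigmaPar. Qed.

Lemma positivity_inv_sbase x : positivity_inv x true (sbase x).
Proof.
split=> [z|z|z]; rewrite ?sbase_ge0 // eqb_id; first move/odd_dist_neq => zx.
  by rewrite /nbexcess sbaseE (negbTE zx) subr0 sumr_ge0 // => w _; apply: sbase_ge0.
move=> zx w; have [o zo /andP[ow _]] := exists_nbr_other z w w.
have ox : o != x by apply: odd_dist_neq; rewrite (odd_dist_nbrs x zo).
exists o; rewrite // ow /nbexcess [sbase x o]sbaseE (negbTE ox) subr0.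
by apply: le_nbsum => [v|]; rewrite ?sbase_ge0 // nbrs_sym.
Qed.

Lemma positivity_inv_rvec0 x y : y \in nbrs x -> positivity_inv x true (rvec x y 0).
Proof.
move=> xy; set a := rvec x y 0.
have a0 z : 0 <= a z by rewrite /a /= addr_ge0 ?sbase_ge0.
split=> // z; rewrite eqb_id => zo.
  rewrite /nbexcess [a z]/a /= !sbaseE (negbTE (odd_dist_neq zo)) add0r subr_ge0.
  case: (eqVneq z y) => [->|_]; last exact: sumr_ge0.
  have yx : x \in nbrs y by rewrite nbrs_sym.
  by apply: le_trans (le_nbsum a0 yx); rewrite /a /= !sbaseE !eqxx lerDl ler0n.
move=> w; have [o zo' /andP[ow oy]] := exists_nbr_other z w y.
have ox : o != x by apply: odd_dist_neq; rewrite (odd_dist_nbrs x zo').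
exists o; rewrite // ow /nbexcess [a o]/a /= !sbaseE (negbTE ox) (negbTE oy) subr0.
by apply: le_nbsum; rewrite // nbrs_sym.
Qed.

Lemma svec_ge0 x t z : 0 <= svec x t z.
Proof. exact: inv_ge0 (positivity_inv_iter (svecS x) (positivity_inv_sbase x) t) z. Qed.

Lemma rvec_ge0 x y t z : y \in nbrs x -> 0 <= rvec x y t z.
Proof.
by move=> xy; apply: inv_ge0 (positivity_inv_iter (rvecS x y) (positivity_inv_rvec0 xy) t) z.
Qed.

Theorem proposition2p1 (x y : T) (t : nat) : adj x y ->
  (forall z, 0 <= svec x t z) /\ (forall z, 0 <= rvec x y t z) /\
  (exists S, covers (svec x t) S) /\ (exists S, covers (rvec x y t) S) /\
  (forall S, covers (svec x t) S ->
     sum_minus x t (svec x t) S = fib (2 * t%:Z) /\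
     sum_plus x t (svec x t) S = fib (2 * t%:Z + 2)) /\
  (forall S, covers (rvec x y t) S ->
     sum_minus x t (rvec x y t) S = fib (2 * t%:Z - 1) /\
     sum_plus x t (rvec x y t) S = fib (2 * t%:Z + 1)).
Proof.
move=> xy; have [s_cov s_sums] := svec_fib_sums x t.
have [r_cov r_sums] := rvec_fib_sums t xy.
by split=> [z|]; [apply: svec_ge0 | split=> [z|]; first exact: rvec_ge0].
Qed.
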